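(* Let $X$ be a finite set of proposals with $m=|X|$. Every divisiveness selection function $\Delta$ on $X$ that satisfies both Anonymity and Neutrality also satisfies Uniformity, i.e., $\Delta(R^U)=X$ for every perfectly uniform profile $R^U$.
   Context: Let $X$ be a finite set of proposals, $m=|X|$, and let $X!$ denote the set of all strict linear orders on $X$. A profile is a function $R:N\to X!$ where $N\subset\mathbb{N}$ is a finite nonempty set of agents (the electorate); write $R_i=R(i)$. A divisiveness selection function (DSF) is a function $\Delta$ mapping every profile (for every finite nonempty $N\subset\mathbb{N}$) to a nonempty subset of $X$. Anonymity: $\Delta(R)=\Delta(R\circ\sigma)$ for every profile $R$ and every bijection $\sigma:\mathbb{N}\to\mathbb{N}$ (so $R\circ\sigma$ is the profile obtained by letting agents exchange preferences, possibly with agents outside $N$). Neutrality: $\Delta(\sigma(R))=\sigma(\Delta(R))$ for every profile $R$ and every permutation $\sigma:X\to X$, where $\sigma$ is extended in the natural way to subsets of $X$ and to profiles (renaming proposals in every ranking). A profile is perfectly uniform if each of the $m!$ linear orders on $X$ occurs in it equally often (i.e., is reported by the same number of agents). *)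

From HB Require Import structures.
From mathcomp Require Import all_boot all_fingroup.
From mathcomp Require Import finmap.
Set Implicit Arguments. Unset Strict Implicit. Unset Printing Implicit Defensive.
Local Open Scope fset_scope.
Local Open Scope fmap_scope.

Section DSF.
Variable X : finType.

(* strict linear orders on X, as boolean relations on X * X:
   r (x, y) means "x is ranked strictly above y" *)
Definition is_slo (r : {ffun X * X -> bool}) : bool :=
  [&& [forall x, ~~ r (x, x)],
      [forall x, forall y, forall z, r (x, y) && r (y, z) ==> r (x, z)] &
      [forall x, forall y, (x != y) ==> r (x, y) || r (y, x)]].

Definition linord := {r : {ffun X * X -> bool} | is_slo r}.

Definition profile := {R : {fmap nat -> linord} | domf R != fset0}.

Definition prof (R : profile) : {fmap nat -> linord} := proj1_sig R.

Definition is_DSF (D : profile -> {set X}) : Prop := forall R, D R != set0.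

(* R' = R ∘ σ : electorate σ^{-1}(N), and R'_i = R_(σ i) *)
Definition agent_relabel (R R' : profile) (s : nat -> nat) : Prop :=
  forall i, (prof R').[? i] = (prof R).[? s i].

Definition anonymous (D : profile -> {set X}) : Prop :=
  forall (R R' : profile) (s : nat -> nat),
    bijective s -> agent_relabel R R' s -> D R = D R'.

Definition renamed (s : {perm X}) (r r' : linord) : Prop :=
  forall x y, val r' (s x, s y) = val r (x, y).

Definition prop_relabel (s : {perm X}) (R R' : profile) : Prop :=
  forall i, match (prof R).[? i], (prof R').[? i] with
            | Some r, Some r' => renamed s r r'
            | None, None => True
            | _, _ => False
            end.

Definition neutral (D : profile -> {set X}) : Prop :=
  forall (s : {perm X}) (R R' : profile),
    prop_relabel s R R' -> D R' = s @: D R.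

Definition occ (R : profile) (r : linord) : nat :=
  #|[pred i : domf (prof R) | prof R i == r]|.

Definition perfectly_uniform (R : profile) : Prop :=
  forall r1 r2 : linord, occ R r1 = occ R r2.

Definition uniformity (D : profile -> {set X}) : Prop :=
  forall R, perfectly_uniform R -> D R = [set: X].

End DSF.

From mathcomp Require Import all_boot all_fingroup.
From mathcomp Require Import finmap.
Set Implicit Arguments. Unset Strict Implicit. Unset Printing Implicit Defensive.
Local Open Scope fset_scope.
Local Open Scope fmap_scope.

(* Fix x in the selected set Δ(R) and any proposal y, and let s be the
   transposition of x and y.  Renaming the proposals of a perfectly uniform
   profile R by s permutes the linear orders, so every order still occurs
   equally often: the renamed profile s(R) is obtained from R by letting the
   agents exchange their ballots.  Anonymity gives Δ(s(R)) = Δ(R), neutrality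
   gives Δ(s(R)) = s(Δ(R)), hence y = s x lies in Δ(R). *)

Lemma perm_of_fiber_card (T : finType) (U : eqType) (f g : T -> U) :
  (forall u, #|[pred i | f i == u]| = #|[pred i | g i == u]|) ->
  exists pi : {perm T}, forall i, f (pi i) = g i.
Proof.
move=> fiber_fg.
have /tuple_permP [p codom_gp] : perm_eq (codom g) (codom_tuple f).
  apply/allP => u _; apply/eqP; rewrite /= !count_map.
  by move: (fiber_fg u); rewrite !cardE /enum_mem !size_filter => ->.
have inj_p : injective (fun i => enum_val (p (enum_rank i))).
  by move=> i j /enum_val_inj /perm_inj /enum_rank_inj.
exists (perm inj_p) => i; rewrite permE.
have := congr1 (nth (g i) ^~ (enum_rank i)) codom_gp.
rewrite nth_codom enum_rankK /= (nth_map (enum_rank i)) ?size_enum_ord //.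
by rewrite nth_ord_enum (tnth_nth (g i)) nth_codom.
Qed.

Section FsetPermExtension.
Variables (K : choiceType) (A : {fset K}).

Definition fset_perm_ext (pi : {perm A}) (k : K) : K :=
  if insub k is Some a then val (pi a) else k.

Lemma fset_perm_ext_val (pi : {perm A}) (a : A) :
  fset_perm_ext pi (val a) = val (pi a).
Proof. by rewrite /fset_perm_ext valK. Qed.

Lemma fset_perm_ext_out (pi : {perm A}) (k : K) :
  k \notin A -> fset_perm_ext pi k = k.
Proof. by move=> kNA; rewrite /fset_perm_ext insubN. Qed.

Lemma fset_perm_extK (pi : {perm A}) :
  cancel (fset_perm_ext pi) (fset_perm_ext pi^-1).
Proof.
move=> k; case: (boolP (k \in A)) => [kA | kNA].
  by rewrite -[k]/(val [` kA]) !fset_perm_ext_val permK.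
by rewrite !fset_perm_ext_out.
Qed.

Lemma bij_fset_perm_ext (pi : {perm A}) : bijective (fset_perm_ext pi).
Proof.
exists (fset_perm_ext pi^-1); first exact: fset_perm_extK.
by rewrite -{2}[pi]invgK; exact: fset_perm_extK.
Qed.

End FsetPermExtension.

Section RenameLinord.
Variables (X : finType) (s : {perm X}).

Definition rename_fun (r : linord X) : {ffun X * X -> bool} :=
  [ffun p => val r (s^-1 p.1, s^-1 p.2)]%g.

Lemma rename_is_slo (r : linord X) : is_slo (rename_fun r).
Proof.
have /and3P [/forallP irr /forallP trans /forallP total] := valP r.
apply/and3P; split.
- by apply/forallP => x; rewrite ffunE; exact: irr.
- apply/forallP => x; apply/forallP => y; apply/forallP => z; rewrite !ffunE.
  by have /forallP/(_ (s^-1 y)%g)/forallP/(_ (s^-1 z)%g) := trans (s^-1 x)%g.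
- apply/forallP => x; apply/forallP => y; apply/implyP => neq_xy; rewrite !ffunE.
  have /forallP/(_ (s^-1 y)%g)/implyP := total (s^-1 x)%g; apply.
  by apply: contra neq_xy => /eqP/perm_inj ->.
Qed.

Definition rename (r : linord X) : linord X := exist _ (rename_fun r) (rename_is_slo r).

Lemma renamed_rename (r : linord X) : renamed s r (rename r).
Proof. by move=> x y; rewrite /= ffunE /= !permK. Qed.

End RenameLinord.

Lemma renameK (X : finType) (s : {perm X}) : cancel (rename s) (rename s^-1).
Proof.
by move=> r; apply: val_inj; apply/ffunP => -[x y]; rewrite !ffunE /= invgK !permK.
Qed.

Lemma renameVK (X : finType) (s : {perm X}) : cancel (rename s^-1) (rename s).
Proof. by rewrite -{2}[s]invgK; exact: renameK. Qed.

Section MapProfile.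
Variables (X : finType) (F : linord X -> linord X).

Definition map_profile (R : profile X) : profile X :=
  exist _ (FinMap [ffun i => F (prof R i)]) (proj2_sig R).

Lemma fnd_map_profile (R : profile X) (i : nat) :
  (prof (map_profile R)).[? i] = omap F (prof R).[? i].
Proof.
case: (boolP (i \in domf (prof R))) => [iR | iNR].
  by rewrite (in_fnd iR) (in_fnd (f := prof (map_profile R)) iR) /= ffunE.
by rewrite !not_fnd.
Qed.

Lemma occ_map_profile (G : linord X -> linord X) (R : profile X) (r : linord X) :
  cancel F G -> cancel G F -> occ (map_profile R) r = occ R (G r).
Proof.
by move=> FK GK; apply: eq_card => i; rewrite !inE /= ffunE (can2_eq FK GK).
Qed.

Lemma agent_relabel_map_profile (R : profile X) (pi : {perm domf (prof R)}) :
  (forall i, prof R (pi i) = prof (map_profile R) i) ->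
  agent_relabel R (map_profile R) (fset_perm_ext pi).
Proof.
move=> Rpi i; case: (boolP (i \in domf (prof R))) => [iR | iNR].
  by rewrite -[i]/(val [` iR]) fset_perm_ext_val -!Some_fnd Rpi.
by rewrite fset_perm_ext_out // fnd_map_profile not_fnd.
Qed.

End MapProfile.

Lemma prop_relabel_rename (X : finType) (s : {perm X}) (R : profile X) :
  prop_relabel s R (map_profile (rename s) R).
Proof.
move=> i; rewrite fnd_map_profile.
by case: (prof R).[? i] => //= r; exact: renamed_rename.
Qed.

Theorem proposition1 (X : finType) (D : profile X -> {set X}) :
  is_DSF D -> anonymous D -> neutral D -> uniformity D.
Proof.
move=> DSF_D anon_D neutral_D R uniform_R.
apply/setP => y; rewrite inE.
have /set0Pn [x Dx] := DSF_D R.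
pose s := tperm x y.
pose R' := map_profile (rename s) R.
have [pi Rpi] : exists pi : {perm domf (prof R)},
    forall i, prof R (pi i) = prof R' i.
  apply: perm_of_fiber_card => r; change (occ R r = occ R' r).
  by rewrite (occ_map_profile R r (renameK s) (renameVK s)); exact: uniform_R.
have -> : D R = D R'.
  exact: anon_D (bij_fset_perm_ext pi) (agent_relabel_map_profile Rpi).
rewrite (neutral_D s _ _ (prop_relabel_rename s R)).
by apply/imsetP; exists x; rewrite // tpermL.
Qed.
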